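(* For $n\in\mathbb{N}$ let $f_n(z)=e^{nz}$, $a_n\equiv0$, $b_n\equiv\infty$, and $c_n(z)=-e^{in\,\mathrm{Im}(z)}$ on $\mathbb{D}$. Then $a_n,b_n,c_n:\mathbb{D}\to\widehat{\mathbb{C}}$ are continuous, $f_n$ omits $a_n,b_n,c_n$ (i.e. $f_n(z)\notin\{a_n(z),b_n(z),c_n(z)\}$ for all $z\in\mathbb{D}$), $\sigma(a_n(z),b_n(z))=\pi/2$ and $\sigma(a_n(z),c_n(z))=\sigma(b_n(z),c_n(z))=\pi/4$ for all $n$ and all $z\in\mathbb{D}$, but $(f_n)_n$ is not normal in $\mathbb{D}$. In particular, the conclusion of the statement ''if each $f$ in a family of meromorphic functions on $\mathbb{D}$ omits three functions $a_f,b_f,c_f$ with $\sigma(a_f,b_f)\sigma(a_f,c_f)\sigma(b_f,c_f)\ge\varepsilon$ on $\mathbb{D}$ then the family is normal'' fails if $a_f,b_f,c_f$ are only required to be continuous.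
   Context: $\mathbb{D}$ is the open unit disc, $\widehat{\mathbb{C}}$ the Riemann sphere, and $\sigma$ the spherical (geodesic) metric on $\widehat{\mathbb{C}}$ identified with the sphere of diameter $1$ (so $\sigma(0,\infty)=\pi/2$). Normality is in the sense of Montel: every sequence has a subsequence converging locally uniformly with respect to $\sigma$ to a meromorphic function or to $\infty$. *)

From Stdlib Require Import Reals.
Open Scope R_scope.

Definition Cpx : Type := (R * R)%type.
Definition Cre (z : Cpx) : R := fst z.
Definition Cim (z : Cpx) : R := snd z.
Definition C0 : Cpx := (0, 0).
Definition Cadd (z w : Cpx) : Cpx := (fst z + fst w, snd z + snd w).
Definition Copp (z : Cpx) : Cpx := (- fst z, - snd z).
Definition Csub (z w : Cpx) : Cpx := Cadd z (Copp w).
Definition Cmul (z w : Cpx) : Cpx :=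
  (fst z * fst w - snd z * snd w, fst z * snd w + snd z * fst w).
Definition Cnorm (z : Cpx) : R := sqrt (fst z * fst z + snd z * snd z).
Definition Cinv (z : Cpx) : Cpx :=
  let d := fst z * fst z + snd z * snd z in (fst z / d, - snd z / d).
Definition Cexp (z : Cpx) : Cpx := (exp (fst z) * cos (snd z), exp (fst z) * sin (snd z)).
Definition RtoC (x : R) : Cpx := (x, 0).

Definition inD (z : Cpx) : Prop := Cnorm z < 1.

Definition Sphere : Type := option Cpx.
Definition infty : Sphere := None.

Definition chordal (p q : Sphere) : R :=
  match p, q with
  | Some z, Some w =>
      Cnorm (Csub z w) / (sqrt (1 + Cnorm z ^ 2) * sqrt (1 + Cnorm w ^ 2))
  | Some z, None | None, Some z => 1 / sqrt (1 + Cnorm z ^ 2)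
  | None, None => 0
  end.

(* spherical (geodesic) metric on the sphere of diameter 1:
   a chord of length c subtends a great-circle arc of length asin c,
   so sph_dist 0 infty = asin 1 = PI/2. *)
Definition sph_dist (p q : Sphere) : R := asin (chordal p q).

Definition Sinv (p : Sphere) : Sphere :=
  match p with
  | None => Some C0
  | Some z => if Req_EM_T (Cnorm z) 0 then None else Some (Cinv z)
  end.

Definition sphere_continuous_on_D (a : Cpx -> Sphere) : Prop :=
  forall z, inD z -> forall eps, 0 < eps -> exists delta, 0 < delta /\
    forall w, inD w -> Cnorm (Csub w z) < delta -> sph_dist (a w) (a z) < eps.

Definition Cdiff_at (g : Cpx -> Cpx) (z0 : Cpx) : Prop :=
  exists L : Cpx, forall eps, 0 < eps -> exists delta, 0 < delta /\
    forall h : Cpx, 0 < Cnorm h < delta ->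
      Cnorm (Csub (Csub (g (Cadd z0 h)) (g z0)) (Cmul L h)) <= eps * Cnorm h.

Definition ball (z0 : Cpx) (r : R) (z : Cpx) : Prop := Cnorm (Csub z z0) < r.

(* On the connected disc this is exactly "meromorphic or == infty". *)
Definition mero_or_infty_on_D (f : Cpx -> Sphere) : Prop :=
  forall z0, inD z0 -> exists r, 0 < r /\ (forall z, ball z0 r z -> inD z) /\
    exists g : Cpx -> Cpx, (forall z, ball z0 r z -> Cdiff_at g z) /\
      ((forall z, ball z0 r z -> f z = Some (g z)) \/
       (forall z, ball z0 r z -> Sinv (f z) = Some (g z))).

(* locally uniform convergence on D w.r.t. sph_dist (uniform on each closed
   disc of radius r < 1, i.e. on each compact subset of D) *)
Definition loc_unif_conv_D (F : nat -> Cpx -> Sphere) (g : Cpx -> Sphere) : Prop :=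
  forall r, 0 <= r < 1 -> forall eps, 0 < eps -> exists N : nat,
    forall k, (N <= k)%nat -> forall z, Cnorm z <= r -> sph_dist (F k z) (g z) < eps.

Definition strictly_incr (phi : nat -> nat) : Prop :=
  forall i j, (i < j)%nat -> (phi i < phi j)%nat.

Definition normal_seq_on_D (F : nat -> Cpx -> Sphere) : Prop :=
  forall phi, strictly_incr phi -> exists psi, strictly_incr psi /\
    exists g, mero_or_infty_on_D g /\ loc_unif_conv_D (fun k => F (phi (psi k))) g.

Definition f_ex (n : nat) (z : Cpx) : Sphere := Some (Cexp (Cmul (RtoC (INR n)) z)).
Definition a_ex (n : nat) (z : Cpx) : Sphere := Some C0.
Definition b_ex (n : nat) (z : Cpx) : Sphere := infty.
Definition c_ex (n : nat) (z : Cpx) : Sphere :=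
  Some (Copp (Cexp (Cmul (0, 1) (RtoC (INR n * Cim z))))).

(* The constants 0 and infinity and the unit circle, on which c_n lives, are at spherical
   distances PI/2 and PI/4 from one another; e^{nz} avoids all three because it is finite,
   nonzero and has argument n Im z rather than n Im z + PI. Along the real axis e^{nx} tends
   to infinity for x > 0 and to 0 for x < 0, so a locally uniform limit of a subsequence is
   infinite just right of 0 and zero just left of it: neither it nor its reciprocal is
   holomorphic near 0. *)
From Stdlib Require Import Reals Lra Lia.
Open Scope R_scope.

Lemma asin_lt_inv x e : 0 <= x -> e <= 1 -> asin x < e -> x < e.
Proof.
  intros Hx He Hasin.
  destruct (Rle_dec 1 x) as [Hx1|Hx1].
  - (* [asin] is extended by the constant [PI / 2] beyond 1 *)
    unfold asin in Hasin.
    destruct (Rle_dec x (-1)); [lra|]. destruct (Rle_dec 1 x); [|lra].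
    pose proof PI2_1. lra.
  - assert (Hsin := sin_asin x ltac:(lra)).
    assert (Hb := asin_bound_lt x ltac:(lra)).
    destruct (Rtotal_order (asin x) 0) as [Hneg|[H0|Hpos]].
    + assert (sin (asin x) < 0) by (apply sin_lt_0_var; lra). lra.
    + rewrite H0, sin_0 in Hsin. lra.
    + pose proof (sin_lt_x _ Hpos). lra.
Qed.

Lemma asin_lt_of_lt_sin x e : 0 < e <= 1 -> 0 <= x < sin e -> asin x < e.
Proof.
  intros He Hx. pose proof PI2_1. pose proof (SIN_bound e).
  assert (Hsin := sin_asin x ltac:(lra)).
  assert (Hb := asin_bound x).
  destruct (Rlt_or_le (asin x) e) as [Hlt|Hle]; [exact Hlt|].
  assert (sin e <= sin (asin x)) by (apply sin_incr_1; lra).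
  lra.
Qed.

Lemma Rabs_sin_le u : Rabs (sin u) <= Rabs u.
Proof.
  assert (Hpos : forall v, 0 <= v -> Rabs (sin v) <= v).
  { intros v Hv. pose proof (SIN_bound v). pose proof PI2_1.
    destruct (Req_dec v 0) as [->|Hv0]; [rewrite sin_0, Rabs_R0; lra|].
    pose proof (sin_lt_x v ltac:(lra)).
    apply Rabs_le. split; [|lra].
    destruct (Rle_dec 1 v); [lra|].
    pose proof (sin_gt_0 v ltac:(lra) ltac:(lra)). lra. }
  destruct (Rle_dec 0 u).
  - rewrite (Rabs_right u) by lra. auto.
  - rewrite (Rabs_left u), <- Rabs_Ropp, <- sin_neg by lra. apply Hpos. lra.
Qed.

Lemma Cnorm_nonneg z : 0 <= Cnorm z.
Proof. apply sqrt_pos. Qed.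

Lemma Cnorm_sq z : Cnorm z ^ 2 = fst z * fst z + snd z * snd z.
Proof. apply pow2_sqrt. nra. Qed.

Lemma Rabs_fst_le_Cnorm z : Rabs (fst z) <= Cnorm z.
Proof. rewrite <- sqrt_Rsqr_abs. apply sqrt_le_1_alt. unfold Rsqr. nra. Qed.

Lemma Rabs_snd_le_Cnorm z : Rabs (snd z) <= Cnorm z.
Proof. rewrite <- sqrt_Rsqr_abs. apply sqrt_le_1_alt. unfold Rsqr. nra. Qed.

Lemma Cnorm_C0 : Cnorm C0 = 0.
Proof. unfold Cnorm, C0; simpl. rewrite Rmult_0_l, Rplus_0_l. apply sqrt_0. Qed.

Lemma Cnorm_eq0 z : Cnorm z = 0 -> z = C0.
Proof.
  intros Hz. assert (H := Cnorm_sq z). rewrite Hz in H.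
  destruct z as [x y]; simpl in H. unfold C0. f_equal; nra.
Qed.

Lemma Cnorm_unit a b : a * a + b * b = 1 -> Cnorm (a, b) = 1.
Proof. intros H. unfold Cnorm; simpl. rewrite H. apply sqrt_1. Qed.

Lemma Cnorm_neg_cis t : Cnorm (- cos t, - sin t) = 1.
Proof. apply Cnorm_unit. pose proof (sin2_cos2 t). unfold Rsqr in *. lra. Qed.

(* |e^{ia} - e^{ib}| = 2 |sin((a-b)/2)| <= |a - b| *)
Lemma Cnorm_sub_neg_cis a b :
  Cnorm (Csub (- cos a, - sin a) (- cos b, - sin b)) <= Rabs (a - b).
Proof.
  unfold Cnorm, Csub, Cadd, Copp; simpl.
  rewrite <- sqrt_Rsqr_abs. apply sqrt_le_1_alt.
  set (s := sin ((a - b) / 2)).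
  assert (Hcos : cos (a - b) = 1 - 2 * s * s).
  { unfold s. rewrite <- cos_2a_sin. f_equal. field. }
  rewrite cos_minus in Hcos.
  assert (Hs : s² <= ((a - b) / 2)²) by (apply Rsqr_le_abs_1, Rabs_sin_le).
  pose proof (sin2_cos2 a). pose proof (sin2_cos2 b). unfold Rsqr in *.
  nra.
Qed.
Lemma sqrt_one_plus_Cnorm_sq_pos z : 0 < sqrt (1 + Cnorm z ^ 2).
Proof. apply sqrt_lt_R0. pose proof (pow2_ge_0 (Cnorm z)). lra. Qed.

Lemma sqrt_one_plus_Cnorm_sq_real u : 0 <= u -> sqrt (1 + Cnorm (u, 0) ^ 2) <= 1 + u.
Proof.
  intros Hu. rewrite Cnorm_sq; simpl.
  rewrite <- (sqrt_pow2 (1 + u)) by lra. apply sqrt_le_1_alt. nra.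
Qed.

Lemma chordal_nonneg p q : 0 <= chordal p q.
Proof.
  assert (Hpos := sqrt_one_plus_Cnorm_sq_pos).
  destruct p as [z|], q as [w|]; cbn [chordal infty]; try lra;
    unfold Rdiv; apply Rmult_le_pos; try lra; try apply Cnorm_nonneg;
    left; apply Rinv_0_lt_compat; try apply Rmult_lt_0_compat; apply Hpos.
Qed.

Lemma sph_dist_refl p : sph_dist p p = 0.
Proof.
  unfold sph_dist. replace (chordal p p) with 0; [apply asin_0|].
  destruct p as [z|]; cbn [chordal infty]; [|reflexivity].
  replace (Csub z z) with C0.
  - rewrite Cnorm_C0. unfold Rdiv. ring.
  - unfold Csub, Cadd, Copp, C0; simpl. f_equal; ring.
Qed.

Lemma chordal_unit z w : Cnorm z = 1 -> Cnorm w = 1 ->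
  chordal (Some z) (Some w) = Cnorm (Csub z w) / 2.
Proof.
  intros Hz Hw. cbn [chordal infty]. rewrite Hz, Hw.
  replace (1 + 1 ^ 2) with 2 by ring. rewrite sqrt_sqrt; lra.
Qed.

Lemma sph_dist_C0_infty : sph_dist (Some C0) infty = PI / 2.
Proof.
  unfold sph_dist; cbn [chordal infty]. rewrite Cnorm_C0.
  replace (1 + 0 ^ 2) with 1 by ring. rewrite sqrt_1, Rdiv_1_r. apply asin_1.
Qed.

Lemma sph_dist_C0_unit w : Cnorm w = 1 -> sph_dist (Some C0) (Some w) = PI / 4.
Proof.
  intros Hw. unfold sph_dist; cbn [chordal infty]. rewrite Cnorm_C0, Hw.
  replace (Csub C0 w) with (Copp w) by (unfold Csub, Cadd, Copp, C0; simpl; f_equal; ring).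
  replace (Cnorm (Copp w)) with (Cnorm w)
    by (unfold Cnorm, Copp; simpl; f_equal; ring).
  rewrite Hw, <- asin_inv_sqrt2. f_equal.
  replace (1 + 0 ^ 2) with 1 by ring. replace (1 + 1 ^ 2) with 2 by ring.
  rewrite sqrt_1. field. apply sqrt2_neq_0.
Qed.

Lemma sph_dist_infty_unit w : Cnorm w = 1 -> sph_dist infty (Some w) = PI / 4.
Proof.
  intros Hw. unfold sph_dist; cbn [chordal infty]. rewrite Hw, <- asin_inv_sqrt2. f_equal.
  replace (1 + 1 ^ 2) with 2 by ring. field. apply sqrt2_neq_0.
Qed.

Lemma chordal_lt_of_sph_dist_lt p q e : e <= 1 -> sph_dist p q < e -> chordal p q < e.
Proof. intros He H. apply asin_lt_inv; auto. apply chordal_nonneg. Qed.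

Lemma sph_dist_lt_of_chordal_lt p q e : 0 < e <= 1 -> chordal p q < sin e -> sph_dist p q < e.
Proof. intros He H. apply asin_lt_of_lt_sin; auto. split; [apply chordal_nonneg|exact H]. Qed.

Lemma chordal_ge_of_Cnorm_sub_ge z w c :
  c * sqrt (1 + Cnorm z ^ 2) <= Cnorm (Csub z w) ->
  c / sqrt (1 + Cnorm w ^ 2) <= chordal (Some z) (Some w).
Proof.
  intros H. cbn [chordal].
  pose proof (sqrt_one_plus_Cnorm_sq_pos z). pose proof (sqrt_one_plus_Cnorm_sq_pos w).
  unfold Rdiv.
  replace (c * / sqrt (1 + Cnorm w ^ 2))
    with (c * sqrt (1 + Cnorm z ^ 2) * / (sqrt (1 + Cnorm z ^ 2) * sqrt (1 + Cnorm w ^ 2)))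
    by (field; lra).
  apply Rmult_le_compat_r; [|exact H].
  left. apply Rinv_0_lt_compat, Rmult_lt_0_compat; assumption.
Qed.

Lemma Cnorm_sub_real_ge u w : 0 <= u -> Cnorm w - u <= Cnorm (Csub (u, 0) w).
Proof.
  intros Hu.
  destruct (Rlt_or_le (Cnorm w - u) 0) as [Hneg|Hnn];
    [pose proof (Cnorm_nonneg (Csub (u, 0) w)); lra|].
  unfold Cnorm at 2, Csub, Cadd, Copp; simpl.
  rewrite <- (sqrt_pow2 (Cnorm w - u)) by lra. apply sqrt_le_1_alt.
  pose proof (Cnorm_sq w). pose proof (Rabs_fst_le_Cnorm w). pose proof (RRle_abs (fst w)).
  nra.
Qed.

Lemma chordal_real_large_ge u w : 2 * Rabs (fst w) + 1 <= u ->
  / 2 / sqrt (1 + Cnorm w ^ 2) <= chordal (Some (u, 0)) (Some w).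
Proof.
  intros Hu. apply chordal_ge_of_Cnorm_sub_ge.
  pose proof (Rabs_pos (fst w)). pose proof (sqrt_one_plus_Cnorm_sq_real u ltac:(lra)).
  pose proof (Rabs_fst_le_Cnorm (Csub (u, 0) w)) as Hfst. simpl in Hfst.
  pose proof (Rabs_triang_inv u (fst w)). rewrite (Rabs_right u) in * by lra.
  unfold Rminus in *. lra.
Qed.

Lemma chordal_real_small_ge u w : 0 <= u <= 1 -> u <= Cnorm w / 2 ->
  Cnorm w / 4 / sqrt (1 + Cnorm w ^ 2) <= chordal (Some (u, 0)) (Some w).
Proof.
  intros Hu Huw. apply chordal_ge_of_Cnorm_sub_ge.
  pose proof (sqrt_one_plus_Cnorm_sq_real u ltac:(lra)).
  pose proof (Cnorm_sub_real_ge u w ltac:(lra)).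
  assert (Cnorm w / 4 * sqrt (1 + Cnorm (u, 0) ^ 2) <= Cnorm w / 4 * 2)
    by (apply Rmult_le_compat_l; pose proof (Cnorm_nonneg w); lra).
  lra.
Qed.

Lemma chordal_real_infty_ge u : 0 <= u <= 1 -> / 2 <= chordal (Some (u, 0)) infty.
Proof.
  intros Hu. cbn [chordal infty].
  pose proof (sqrt_one_plus_Cnorm_sq_real u ltac:(lra)).
  pose proof (sqrt_one_plus_Cnorm_sq_pos (u, 0)).
  unfold Rdiv. rewrite Rmult_1_l. apply Rinv_le_contravar; lra.
Qed.

Definition sph_conv (u : nat -> Sphere) (p : Sphere) : Prop :=
  forall eps, 0 < eps -> exists N, forall k, (N <= k)%nat -> sph_dist (u k) p < eps.

Lemma not_sph_conv_of_chordal_ge u p c : 0 < c ->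
  (forall N, exists k, (N <= k)%nat /\ c <= chordal (u k) p) -> ~ sph_conv u p.
Proof.
  intros Hc Hfreq Hconv.
  assert (Heps : 0 < Rmin c 1) by (apply Rmin_glb_lt; lra).
  destruct (Hconv _ Heps) as [N HN].
  destruct (Hfreq N) as [k [Hk Hck]].
  specialize (HN k Hk).
  apply chordal_lt_of_sph_dist_lt in HN; [|apply Rmin_r].
  pose proof (Rmin_l c 1). lra.
Qed.

Lemma sph_conv_real_unbounded u w :
  (forall M, exists N, forall k, (N <= k)%nat -> M <= u k) ->
  ~ sph_conv (fun k => Some (u k, 0)) (Some w).
Proof.
  intros Hu. apply not_sph_conv_of_chordal_ge with (c := / 2 / sqrt (1 + Cnorm w ^ 2)).
  - pose proof (sqrt_one_plus_Cnorm_sq_pos w). unfold Rdiv.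
    apply Rmult_lt_0_compat; apply Rinv_0_lt_compat; lra.
  - intros N. destruct (Hu (2 * Rabs (fst w) + 1)) as [N' HN'].
    exists (Nat.max N N'). split; [lia|].
    apply chordal_real_large_ge, HN'. lia.
Qed.

Lemma sph_conv_real_vanishing u p :
  (forall e, 0 < e -> exists N, forall k, (N <= k)%nat -> 0 <= u k <= e) ->
  sph_conv (fun k => Some (u k, 0)) p -> p = Some C0.
Proof.
  intros Hu Hconv. destruct p as [w|].
  - destruct (Req_dec (Cnorm w) 0) as [Hw0|Hw0]; [now rewrite (Cnorm_eq0 w Hw0)|].
    exfalso. pose proof (Cnorm_nonneg w). pose proof (sqrt_one_plus_Cnorm_sq_pos w).
    revert Hconv.
    apply not_sph_conv_of_chordal_ge with (c := Cnorm w / 4 / sqrt (1 + Cnorm w ^ 2)).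
    + unfold Rdiv. repeat apply Rmult_lt_0_compat; try apply Rinv_0_lt_compat; lra.
    + intros N. assert (He : 0 < Rmin 1 (Cnorm w / 2)) by (apply Rmin_glb_lt; lra).
      destruct (Hu _ He) as [N' HN'].
      exists (Nat.max N N'). split; [lia|].
      destruct (HN' (Nat.max N N') ltac:(lia)) as [Hk0 Hk].
      pose proof (Rmin_l 1 (Cnorm w / 2)). pose proof (Rmin_r 1 (Cnorm w / 2)).
      apply chordal_real_small_ge; lra.
  - exfalso. revert Hconv. apply not_sph_conv_of_chordal_ge with (c := / 2); [lra|].
    intros N. destruct (Hu 1 ltac:(lra)) as [N' HN'].
    exists (Nat.max N N'). split; [lia|].
    apply chordal_real_infty_ge, HN'. lia.
Qed.

Lemma strictly_incr_ge_id psi : strictly_incr psi -> forall k, (k <= psi k)%nat.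
Proof.
  intros Hpsi k. induction k as [|k IH]; [lia|].
  specialize (Hpsi k (S k) ltac:(lia)). lia.
Qed.

Lemma exp_INR_mul_unbounded psi x : strictly_incr psi -> 0 < x ->
  forall M, exists N, forall k, (N <= k)%nat -> M <= exp (INR (psi k) * x).
Proof.
  intros Hpsi Hx M. destruct (INR_archimed x M Hx) as [N HN].
  exists N. intros k Hk.
  assert (HNk : INR N <= INR (psi k))
    by (apply le_INR; pose proof (strictly_incr_ge_id psi Hpsi k); lia).
  pose proof (exp_ineq1_le (INR (psi k) * x)).
  assert (INR N * x <= INR (psi k) * x) by (apply Rmult_le_compat_r; lra).
  lra.
Qed.

Lemma exp_INR_mul_vanishing psi x : strictly_incr psi -> x < 0 ->
  forall e, 0 < e -> exists N, forall k, (N <= k)%nat -> 0 <= exp (INR (psi k) * x) <= e.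
Proof.
  intros Hpsi Hx e He.
  destruct (exp_INR_mul_unbounded psi (- x) Hpsi ltac:(lra) (/ e)) as [N HN].
  exists N. intros k Hk. specialize (HN k Hk).
  replace (INR (psi k) * x) with (- (INR (psi k) * - x)) by ring.
  rewrite exp_Ropp. split; [left; apply Rinv_0_lt_compat, exp_pos|].
  rewrite <- (Rinv_inv e). apply Rinv_le_contravar; [apply Rinv_0_lt_compat|]; lra.
Qed.

Lemma f_ex_eq n z : f_ex n z =
  Some (exp (INR n * fst z) * cos (INR n * snd z), exp (INR n * fst z) * sin (INR n * snd z)).
Proof.
  unfold f_ex, Cexp, Cmul, RtoC; simpl.
  do 2 f_equal; f_equal; f_equal; ring.
Qed.

Lemma f_ex_real n x : f_ex n (x, 0) = Some (exp (INR n * x), 0).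
Proof. rewrite f_ex_eq; simpl. rewrite Rmult_0_r, cos_0, sin_0. do 2 f_equal; ring. Qed.

Lemma c_ex_eq n z : c_ex n z = Some (- cos (INR n * snd z), - sin (INR n * snd z)).
Proof.
  unfold c_ex, Cexp, Cmul, RtoC, Copp, Cim; simpl.
  replace (0 * (INR n * snd z) - 1 * 0) with 0 by ring.
  replace (0 * 0 + 1 * (INR n * snd z)) with (INR n * snd z) by ring.
  rewrite exp_0, !Rmult_1_l. reflexivity.
Qed.

Lemma sphere_continuous_on_D_const p : sphere_continuous_on_D (fun _ => p).
Proof.
  intros z _ eps Heps. exists 1. split; [lra|].
  intros w _ _. rewrite sph_dist_refl. exact Heps.
Qed.

(* [c_ex n] is [n]-Lipschitz into the unit circle, whose chordal metric is half the euclidean one. *)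
Lemma sphere_continuous_on_D_c_ex n : sphere_continuous_on_D (c_ex n).
Proof.
  intros z _ eps Heps.
  set (e := Rmin eps 1).
  assert (He : 0 < e <= 1) by (split; [apply Rmin_glb_lt; lra|apply Rmin_r]).
  assert (Hse : 0 < sin e) by (pose proof PI2_1; apply sin_gt_0; lra).
  pose proof (pos_INR n).
  exists (sin e / (INR n + 1)). split; [apply Rdiv_lt_0_compat; lra|].
  intros w _ Hw.
  apply Rlt_le_trans with e; [|apply Rmin_l].
  apply sph_dist_lt_of_chordal_lt; [exact He|].
  rewrite !c_ex_eq, chordal_unit by apply Cnorm_neg_cis.
  pose proof (Cnorm_sub_neg_cis (INR n * snd w) (INR n * snd z)) as Hcis.
  replace (INR n * snd w - INR n * snd z) with (INR n * (snd w - snd z)) in Hcis by ring.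
  rewrite Rabs_mult, (Rabs_right (INR n)) in Hcis by lra.
  pose proof (Rabs_snd_le_Cnorm (Csub w z)) as Hsnd. simpl in Hsnd.
  assert (Hstep : INR n * Rabs (snd w + - snd z) <= INR n * (sin e / (INR n + 1)))
    by (apply Rmult_le_compat_l; lra).
  assert (Hdelta : (INR n + 1) * (sin e / (INR n + 1)) = sin e) by (field; lra).
  assert (0 < sin e / (INR n + 1)) by (apply Rdiv_lt_0_compat; lra).
  unfold Rminus in Hcis. nra.
Qed.

Lemma f_ex_omits n z : f_ex n z <> a_ex n z /\ f_ex n z <> b_ex n z /\ f_ex n z <> c_ex n z.
Proof.
  rewrite f_ex_eq, c_ex_eq. unfold a_ex, b_ex, infty.
  set (E := exp (INR n * fst z)). assert (HE : 0 < E) by apply exp_pos.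
  set (t := INR n * snd z). pose proof (sin2_cos2 t) as Hsc. unfold Rsqr in Hsc.
  split; [|split]; try discriminate; intros Heq; injection Heq; intros Hsin Hcos.
  - unfold C0 in *. nra.
  - assert (Hc : (E + 1) * cos t = 0) by lra. assert (Hs : (E + 1) * sin t = 0) by lra.
    apply Rmult_integral in Hc; apply Rmult_integral in Hs. nra.
Qed.

Lemma loc_unif_conv_D_pointwise F g z : loc_unif_conv_D F g -> inD z ->
  sph_conv (fun k => F k z) (g z).
Proof.
  intros Hconv Hz eps Heps.
  destruct (Hconv (Cnorm z) (conj (Cnorm_nonneg z) Hz) eps Heps) as [N HN].
  exists N. intros k Hk. apply HN; [exact Hk | apply Rle_refl].
Qed.

Lemma f_ex_conv_real psi g x : loc_unif_conv_D (fun k => f_ex (psi k)) g -> inD (x, 0) ->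
  sph_conv (fun k => Some (exp (INR (psi k) * x), 0)) (g (x, 0)).
Proof.
  intros Hconv Hx eps Heps.
  destruct (loc_unif_conv_D_pointwise _ _ _ Hconv Hx eps Heps) as [N HN].
  exists N. intros k Hk. rewrite <- f_ex_real. exact (HN k Hk).
Qed.

Lemma ball_C0_real r x : Rabs x < r -> ball C0 r (x, 0).
Proof.
  intros Hx. unfold ball, Cnorm, Csub, Cadd, Copp, C0; simpl.
  replace ((x + - 0) * (x + - 0) + (0 + - 0) * (0 + - 0)) with (Rsqr x) by (unfold Rsqr; ring).
  rewrite sqrt_Rsqr_abs. exact Hx.
Qed.

Lemma Sinv_C0 : Sinv (Some C0) = infty.
Proof. unfold Sinv. rewrite Cnorm_C0. destruct (Req_EM_T 0 0); [reflexivity|lra]. Qed.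

Lemma f_ex_not_normal : ~ normal_seq_on_D f_ex.
Proof.
  intros Hnormal.
  destruct (Hnormal (fun i => i)) as [psi [Hpsi [g [Hg Hconv]]]]; [intros i j; auto|].
  destruct (Hg C0) as [r [Hr [Hin [G [_ [Hfin|Hinv]]]]]].
  { unfold inD. rewrite Cnorm_C0. lra. }
  - assert (Hball : ball C0 r (r / 2, 0)) by (apply ball_C0_real; rewrite Rabs_right; lra).
    apply (sph_conv_real_unbounded _ (G (r / 2, 0)) (exp_INR_mul_unbounded psi (r / 2) Hpsi ltac:(lra))).
    rewrite <- (Hfin _ Hball). apply f_ex_conv_real; auto.
  - assert (Hball : ball C0 r (- (r / 2), 0)) by (apply ball_C0_real; rewrite Rabs_left; lra).
    assert (Hzero : g (- (r / 2), 0) = Some C0).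
    { apply (sph_conv_real_vanishing _ _ (exp_INR_mul_vanishing psi (- (r / 2)) Hpsi ltac:(lra))).
      apply f_ex_conv_real; auto. }
    specialize (Hinv _ Hball). rewrite Hzero, Sinv_C0 in Hinv. discriminate.
Qed.

Theorem mainTheorem2 :
  (forall n : nat,
     sphere_continuous_on_D (a_ex n) /\
     sphere_continuous_on_D (b_ex n) /\
     sphere_continuous_on_D (c_ex n)) /\
  (forall (n : nat) (z : Cpx), inD z ->
     f_ex n z <> a_ex n z /\ f_ex n z <> b_ex n z /\ f_ex n z <> c_ex n z) /\
  (forall (n : nat) (z : Cpx), inD z ->
     sph_dist (a_ex n z) (b_ex n z) = PI / 2 /\
     sph_dist (a_ex n z) (c_ex n z) = PI / 4 /\
     sph_dist (b_ex n z) (c_ex n z) = PI / 4) /\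
  ~ normal_seq_on_D f_ex.
Proof.
  split; [|split; [|split]].
  - intros n. split; [|split]; [apply sphere_continuous_on_D_const ..|].
    apply sphere_continuous_on_D_c_ex.
  - intros n z _. apply f_ex_omits.
  - intros n z _. unfold a_ex, b_ex. rewrite c_ex_eq.
    split; [|split]; [apply sph_dist_C0_infty|apply sph_dist_C0_unit|apply sph_dist_infty_unit];
      apply Cnorm_neg_cis.
  - exact f_ex_not_normal.
Qed.
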